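(* Let $\mathbf H\in\mathbb R^{n\times n}$ be symmetric positive semidefinite with eigenvalues $\lambda_1(\mathbf H)\ge\dots\ge\lambda_n(\mathbf H)\ge0$, let $\Phi(\mathbf M)=\mathbf M-\frac{\mathbf M^2}{\mathrm{tr}(\mathbf M)}$, and let $q\in[n]$ be arbitrary. Then for every $r\in\mathbb N$, $\lambda_1(\Phi^r(\mathbf H))\le\eta(r)$, where $\eta$ is the decreasing solution of the ordinary differential equation $$\frac{d\eta(t)}{dt}=-\frac{\eta(t)^2}{q\,\eta(t)+\sum_{l=q+1}^n\lambda_l(\mathbf H)},\qquad\eta(0)=\lambda_1(\mathbf H).$$
   Context: $\Phi^r$ denotes the $r$-fold composition of $\Phi$, and $\lambda_1$ the largest eigenvalue. *)

From HB Require Import structures.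
From mathcomp Require Import all_boot all_order all_algebra.
From mathcomp Require Import all_classical all_reals all_analysis.
Set Implicit Arguments. Unset Strict Implicit. Unset Printing Implicit Defensive.
Import Order.TTheory GRing.Theory Num.Theory.
Local Open Scope ring_scope.

Definition Phi (R : fieldType) (n : nat) (M : 'M[R]_n) : 'M[R]_n :=
  M - (\tr M)^-1 *: (M *m M).

(* A real symmetric matrix H is conjugate to a diagonal matrix, conjugation
   commutes with Phi, and on a diagonal matrix Phi acts entrywise by
   x |-> x - x^2 / T, T the trace.  Hence the eigenvalues of Phi^r(H) arise from
   those of H by iterating this scalar map, which keeps them nonnegative and in
   the same order.  The top one a_r then satisfies
   a_(r+1) <= a_r - a_r^2 / (q a_r + S), S = lam_(q+1) + ... + lam_n, since the
   trace is at most q a_r + S.  The right-hand side is one explicit Euler step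
   of unit length for eta' = - eta^2 / (q eta + S); it is increasing, and it
   stays below eta because |eta'| decreases along the decreasing solution. *)

From HB Require Import structures.
From mathcomp Require Import all_boot all_order all_algebra.
From mathcomp Require Import all_classical all_reals all_analysis.
From mathcomp Require Import ring lra.
Import Order.TTheory GRing.Theory Num.Theory.
Import numFieldNormedType.Exports.
Local Open Scope classical_set_scope.
Local Open Scope ring_scope.

Set Implicit Arguments.
Unset Strict Implicit.
Unset Printing Implicit Defensive.

Definition shrink (R : fieldType) (T x : R) : R := x - T^-1 * x ^+ 2.

Section Shrink.
Variable R : realFieldType.
Implicit Types T x y : R.

Lemma shrink0 T : shrink T 0 = 0.
Proof. by rewrite /shrink expr0n mulr0 subr0. Qed.

Lemma shrink_ge0 T x : 0 <= x -> x <= T -> 0 <= shrink T x.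
Proof.
move=> x0 xT; rewrite subr_ge0.
have [->|T0] := eqVneq T 0; first by rewrite invr0 mul0r.
have Tpos : 0 < T by rewrite lt_neqAle eq_sym T0 (le_trans x0 xT).
by rewrite expr2 mulrCA ler_piMr // mulrC ler_pdivrMr // mul1r.
Qed.

Lemma shrink_le T x : 0 <= T -> shrink T x <= x.
Proof. by move=> T0; rewrite gerBl mulr_ge0 ?invr_ge0 ?sqr_ge0. Qed.

Lemma ler_shrink T x y : 0 <= x -> x <= y -> x + y <= T ->
  shrink T x <= shrink T y.
Proof.
move=> x0 xy xyT; rewrite -subr_ge0.
have -> : shrink T y - shrink T x = (y - x) * (1 - T^-1 * (x + y)).
  by rewrite /shrink; ring.
rewrite mulr_ge0 ?subr_ge0 //.
have [->|T0] := eqVneq T 0; first by rewrite invr0 mul0r ler01.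
have Tpos : 0 < T.
  by rewrite lt_neqAle eq_sym T0 (le_trans _ xyT) // addr_ge0 // (le_trans x0).
by rewrite mulrC ler_pdivrMr // mul1r.
Qed.

Lemma ler_shrinkT T T' x : 0 <= x -> x <= T -> T <= T' ->
  shrink T x <= shrink T' x.
Proof.
move=> x0 xT TT'.
have [T0|Tpos] := eqVneq T 0.
  have -> : x = 0 by apply/eqP; rewrite eq_le -{1}T0 xT x0.
  by rewrite !shrink0.
have Tgt0 : 0 < T by rewrite lt_neqAle eq_sym Tpos (le_trans x0 xT).
rewrite lerD2l lerN2 ler_wpM2r ?sqr_ge0 // lef_pV2 ?posrE //.
exact: lt_le_trans TT'.
Qed.

End Shrink.

Section NatSums.
Variables (R : numDomainType) (F : nat -> R).

Lemma ler_sum_nat_term a b i : (forall j, (a <= j < b)%N -> 0 <= F j) ->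
  (a <= i < b)%N -> F i <= \sum_(a <= j < b) F j.
Proof.
move=> F_ge0 /andP[ai ib].
have sum_ge0 c d : (a <= c)%N -> (d <= b)%N -> 0 <= \sum_(c <= j < d) F j.
  move=> ac db; rewrite big_nat_cond; apply: sumr_ge0 => j /andP[/andP[cj jd] _].
  by apply: F_ge0; rewrite (leq_trans ac cj) (leq_trans jd db).
rewrite (big_cat_nat ai (ltnW ib)) /= [X in _ + X]big_ltn //.
by rewrite addrCA lerDl addr_ge0 ?sum_ge0 ?(ltnW ib) ?(leqW ai).
Qed.

Lemma ler_sum_nat_pair a b i j : (forall k, (a <= k < b)%N -> 0 <= F k) ->
  (a <= i)%N -> (i < j < b)%N -> F i + F j <= \sum_(a <= k < b) F k.
Proof.
move=> F_ge0 ai /andP[ij jb]; have aj := leq_trans ai (ltnW ij).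
rewrite (big_cat_nat aj (ltnW jb)) /=; apply: lerD; apply: ler_sum_nat_term.
- by move=> k /andP[ak kj]; rewrite F_ge0 // ak (ltn_trans kj jb).
- by rewrite ai.
- by move=> k /andP[jk kb]; rewrite F_ge0 // kb (leq_trans aj jk).
- by rewrite leqnn.
Qed.

End NatSums.

(* If M is diagonalizable with spectrum s (listed with multiplicity), then
   Phi^r(M) has the eigenvalue [Phi_eig s r x] for each x in s. *)
Fixpoint Phi_eig (R : fieldType) (s : seq R) (r : nat) (x : R) : R :=
  if r is r'.+1 then shrink (\sum_(y <- s) Phi_eig s r' y) (Phi_eig s r' x)
  else x.

Section ConjugateDiagonal.
Variables (F : fieldType) (n : nat).
Implicit Types (A P : 'M[F]_n) (d : 'rV[F]_n).

Lemma char_poly_conj P A : P \in unitmx ->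
  char_poly (invmx P *m A *m P) = char_poly A.
Proof.
move=> Pu; rewrite /char_poly /char_poly_mx.
have -> : 'X%:M - map_mx polyC (invmx P *m A *m P) =
    map_mx polyC (invmx P) *m ('X%:M - map_mx polyC A) *m map_mx polyC P.
  rewrite !map_mxM mulmxBr mulmxBl ?mulmxA; congr (_ - _).
  by rewrite mul_mx_scalar -scalemxAl -map_mxM mulVmx // map_mx1 scalemx1.
rewrite !det_mulmx !det_map_mx /= mulrAC -rmorphM -det_mulmx mulVmx //.
by rewrite det1 rmorph1 mul1r.
Qed.

Lemma char_poly_diag d :
  char_poly (diag_mx d) = \prod_(x <- [seq d 0 i | i <- enum 'I_n]) ('X - x%:P).
Proof.
rewrite char_poly_trig ?diag_mx_is_trig // big_map big_enum /=.
by apply: eq_bigr => i _; rewrite mxE eqxx.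
Qed.

Lemma eigenvalue_conj_diag P d a : P \in unitmx ->
  eigenvalue (invmx P *m diag_mx d *m P) a -> exists i, a = d 0 i.
Proof.
move=> Pu; rewrite eigenvalue_root_char char_poly_conj // char_poly_diag.
by rewrite root_prod_XsubC => /mapP[i _ ->]; exists i.
Qed.

Lemma Phi_conj P A : P \in unitmx ->
  Phi (invmx P *m A *m P) = invmx P *m Phi A *m P.
Proof.
move=> Pu; have trE : \tr (invmx P *m A *m P) = \tr A.
  by rewrite mxtrace_mulC mulmxA mulmxV // mul1mx.
have sqE : (invmx P *m A *m P) *m (invmx P *m A *m P) = invmx P *m (A *m A) *m P.
  by rewrite !mulmxA mulmxK.
by rewrite /Phi trE sqE scalemxAl scalemxAr -mulmxBl -mulmxBr.
Qed.

Lemma Phi_diag d :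
  Phi (diag_mx d) = diag_mx (\row_i shrink (\sum_j d 0 j) (d 0 i)).
Proof.
rewrite /Phi mxtrace_diag mul_diag_mx; apply/matrixP => i j; rewrite !mxE.
have [->|ij] := eqVneq i j; first by rewrite !mulr1n /shrink expr2.
by rewrite !mulr0n !mulr0 subr0.
Qed.

Lemma iter_Phi_conj_diag (s : seq F) P d r : P \in unitmx ->
  perm_eq [seq d 0 i | i <- enum 'I_n] s ->
  iter r (@Phi F n) (invmx P *m diag_mx d *m P) =
  invmx P *m diag_mx (\row_i Phi_eig s r (d 0 i)) *m P.
Proof.
move=> Pu ds; elim: r => [|r IH].
  by congr (_ *m diag_mx _ *m _); apply/rowP => i; rewrite mxE.
rewrite iterS IH Phi_conj // Phi_diag; congr (_ *m diag_mx _ *m _).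
apply/rowP => i; rewrite !mxE /=; congr shrink.
rewrite -(perm_big _ ds) big_map big_enum /=.
by apply: eq_bigr => j _; rewrite mxE.
Qed.

End ConjugateDiagonal.

Lemma trmxX (R : comNzRingType) n (A : 'M[R]_n) k : (A ^+ k)^T = A^T ^+ k.
Proof.
elim: k => [|k IH]; first by rewrite !expr0 trmx1.
by rewrite exprS -mulmxE trmx_mul IH mulmxE -exprSr.
Qed.

Lemma trmx_horner (R : comNzRingType) n (A : 'M[R]_n.+1) p :
  (horner_mx A p)^T = horner_mx A^T p.
Proof.
elim/poly_ind: p => [|p c IH]; first by rewrite !rmorph0 trmx0.
rewrite !rmorphD !rmorphM /= !horner_mx_X !horner_mx_C linearD /= tr_scalar_mx.
rewrite -!mulmxE trmx_mul IH; congr (_ + _).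
by have := comm_mx_horner p (erefl (A^T *m A^T)).
Qed.

Lemma mulmx_trmx_diag (R : comNzRingType) m n (A : 'M[R]_(m, n)) i :
  (A *m A^T) i i = \sum_k A i k ^+ 2.
Proof. by rewrite mxE; apply: eq_bigr => k _; rewrite mxE expr2. Qed.

Lemma mulmx_trmx_eq0 (R : realDomainType) m n (A : 'M[R]_(m, n)) :
  A *m A^T = 0 -> A = 0.
Proof.
move=> AAt0; apply/matrixP => i j; rewrite mxE.
have := mulmx_trmx_diag A i; rewrite AAt0 mxE => /esym/psumr_eq0P.
by move=> /(_ (fun k _ => sqr_ge0 _) j isT) /eqP; rewrite sqrf_eq0 => /eqP.
Qed.

Lemma sym_nilpotent_eq0 (R : realDomainType) n (A : 'M[R]_n) m :
  A^T = A -> A ^+ m.+1 = 0 -> A = 0.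
Proof.
move=> Asym; elim: m => [|m IH] Am0; first by rewrite -[A]expr1.
apply: IH; apply: mulmx_trmx_eq0; rewrite trmxX Asym mulmxE -exprD.
by rewrite -addSnnS exprD Am0 mul0r.
Qed.

Lemma dvdp_prod_XsubC_expn (R : idomainType) (s t : seq R) : {subset s <= t} ->
  \prod_(x <- s) ('X - x%:P) %| (\prod_(x <- t) ('X - x%:P)) ^+ size s.
Proof.
elim: s => [|x s IH] st; first by rewrite big_nil dvd1p.
rewrite big_cons exprS; apply: dvdp_mul.
  by rewrite dvdp_XsubCl root_prod_XsubC st ?mem_head.
by apply: IH => y ys; rewrite st // in_cons ys orbT.
Qed.

(* The squarefree part Q of the characteristic polynomial satisfies
   Q(A)^k = 0 by Cayley-Hamilton, and Q(A) is symmetric, so Q(A) = 0. *)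
Lemma sym_diagonalizable (R : realFieldType) n (A : 'M[R]_n.+1) s :
  A^T = A -> char_poly A = \prod_(x <- s) ('X - x%:P) -> diagonalizable A.
Proof.
move=> Asym charA; apply/diagonalizableP; exists (undup s); first exact: undup_uniq.
apply: mxminpoly_min; set Q := \prod_(x <- undup s) _.
have QA_sym : (horner_mx A Q)^T = horner_mx A Q by rewrite trmx_horner Asym.
apply: (sym_nilpotent_eq0 (m := size s) QA_sym).
have /dvdpP[c QE] : char_poly A %| Q ^+ size s.
  by rewrite charA dvdp_prod_XsubC_expn // => x; rewrite mem_undup.
by rewrite -rmorphXn exprSr QE !rmorphM /= Cayley_Hamilton mulr0 mul0r.
Qed.

Lemma sym_conj_diag (R : realFieldType) n (A : 'M[R]_n.+1) s :
  A^T = A -> char_poly A = \prod_(x <- s) ('X - x%:P) ->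
  exists P d, [/\ P \in unitmx, A = invmx P *m diag_mx d *m P &
                  perm_eq [seq d 0 i | i <- enum 'I_n.+1] s].
Proof.
move=> Asym charA.
have [P Pu /similar_diagPex[d /(similarLR Pu)]] := sym_diagonalizable Asym charA.
rewrite conjVmx // => AE; exists P, d; split => //.
by apply: prod_XsubC_eq; rewrite -char_poly_diag -charA AE char_poly_conj.
Qed.

Lemma psd_eigenvalue_ge0 (R : realFieldType) n (A : 'M[R]_n) a :
  (forall v : 'rV[R]_n, 0 <= (v *m A *m v^T) 0 0) -> eigenvalue A a -> 0 <= a.
Proof.
move=> Apsd /eigenvalueP[v vA v_neq0].
have vv_ge0 : 0 <= (v *m v^T) 0 0.
  by rewrite mulmx_trmx_diag sumr_ge0 // => k _; apply: sqr_ge0.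
have vv_neq0 : (v *m v^T) 0 0 != 0.
  apply: contra v_neq0 => /eqP vv0; apply/eqP/mulmx_trmx_eq0.
  by apply/matrixP => i j; rewrite !ord1 vv0 mxE.
have := Apsd v; rewrite vA -scalemxAl mxE.
by rewrite pmulr_lge0 // lt_def vv_neq0.
Qed.

Section ShrinkIteration.
Variables (R : realFieldType) (n : nat) (lam : nat -> R).
Hypothesis lam_ge0 : forall l, (1 <= l <= n)%N -> 0 <= lam l.
Hypothesis lam_antitone :
  forall l m, (1 <= l)%N -> (l <= m)%N -> (m <= n)%N -> lam m <= lam l.

Local Notation s := [seq lam l | l <- index_iota 1 n.+1].
Local Notation T r := (\sum_(1 <= l < n.+1) Phi_eig s r (lam l)).

Lemma Phi_eigS r x : Phi_eig s r.+1 x = shrink (T r) (Phi_eig s r x).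
Proof. by rewrite /= big_map. Qed.

Lemma Phi_eig_ge0 r l : (1 <= l <= n)%N -> 0 <= Phi_eig s r (lam l).
Proof.
elim: r l => [|r IH] l hl; first exact: lam_ge0.
rewrite Phi_eigS shrink_ge0 ?IH //.
by apply: ler_sum_nat_term => [j|]; rewrite ltnS // => /IH.
Qed.

Lemma Phi_eig_le_sum r l : (1 <= l <= n)%N -> Phi_eig s r (lam l) <= T r.
Proof.
by move=> hl; apply: ler_sum_nat_term => [j|]; rewrite ltnS // => /Phi_eig_ge0.
Qed.

Lemma Phi_eig_le r l : (1 <= l <= n)%N -> Phi_eig s r (lam l) <= lam l.
Proof.
move=> hl; elim: r => [|r IH] //; rewrite Phi_eigS (le_trans _ IH) // shrink_le //.
by rewrite big_nat_cond sumr_ge0 // => j /andP[]; rewrite ltnS => /Phi_eig_ge0.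
Qed.

Lemma Phi_eig_antitone r l m : (1 <= l)%N -> (l <= m)%N -> (m <= n)%N ->
  Phi_eig s r (lam m) <= Phi_eig s r (lam l).
Proof.
move=> l1 lm mn; elim: r => [|r IH]; first exact: lam_antitone.
have [->|l_neq_m] := eqVneq l m; first by [].
rewrite !Phi_eigS ler_shrink ?Phi_eig_ge0 ?(leq_trans l1 lm) // addrC.
apply: ler_sum_nat_pair => //; last by rewrite ltn_neqAle l_neq_m lm ltnS.
by move=> k; rewrite ltnS => /Phi_eig_ge0.
Qed.

Lemma Phi_eig_sum_le r q : (q <= n)%N ->
  T r <= q%:R * Phi_eig s r (lam 1) + \sum_(q.+1 <= l < n.+1) lam l.
Proof.
move=> qn; rewrite (@big_cat_nat _ _ _ q.+1) //=; apply: lerD.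
  rewrite (_ : q%:R * _ = \sum_(1 <= l < q.+1) Phi_eig s r (lam 1)); last first.
    by rewrite sumr_const_nat subn1 mulr_natl.
  apply: ler_sum_nat => l /andP[l1 lq].
  by rewrite Phi_eig_antitone // -ltnS (leq_trans lq).
apply: ler_sum_nat => l /andP[ql]; rewrite ltnS => ln.
by rewrite Phi_eig_le // ln (leq_trans _ ql).
Qed.

End ShrinkIteration.

Section EulerComparison.
Variables (R : realType) (q : nat) (S : R) (eta : R -> R).
Hypothesis q_gt0 : (0 < q)%N.
Hypothesis S_ge0 : 0 <= S.
Hypothesis eta_cont : {within `[0%R, +oo[, continuous eta}.
Hypothesis eta_deriv : forall t : R, 0 < t ->
  is_derive t 1 eta (- (eta t ^+ 2) / (q%:R * eta t + S)).
Hypothesis eta_noninc : forall s t : R, 0 <= s -> s <= t -> eta t <= eta s.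
Implicit Types a b c d t u v x y : R.

Let rate x := (q%:R * x + S)^-1 * x ^+ 2.
Let euler x := shrink (q%:R * x + S) x.

Lemma rate_ge0 x : 0 <= x -> 0 <= rate x.
Proof.
move=> x_ge0; rewrite mulr_ge0 ?sqr_ge0 // invr_ge0 addr_ge0 //.
by rewrite mulr_ge0 ?ler0n.
Qed.

Lemma rate_le x : 0 <= x -> rate x <= x.
Proof.
move=> x_ge0; have [->|x_neq0] := eqVneq x 0; first by rewrite /rate expr0n mulr0.
have x_gt0 : 0 < x by rewrite lt_def x_neq0.
have d_gt0 : 0 < q%:R * x + S by rewrite ltr_pwDl // mulr_gt0 // ltr0n.
rewrite -subr_ge0.
have -> : x - rate x = x * ((q%:R - 1) * x + S) / (q%:R * x + S).
  by rewrite /rate; field; rewrite gt_eqF.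
apply: divr_ge0 (ltW d_gt0); rewrite mulr_ge0 // addr_ge0 // mulr_ge0 //.
by rewrite subr_ge0 ler1n.
Qed.

Lemma ler_rate x y : 0 <= x -> x <= y -> rate x <= rate y.
Proof.
move=> x_ge0 xy; have y_ge0 := le_trans x_ge0 xy.
have [->|x_neq0] := eqVneq x 0; first by rewrite /rate expr0n mulr0 rate_ge0.
have x_gt0 : 0 < x by rewrite lt_def x_neq0.
have y_gt0 : 0 < y := lt_le_trans x_gt0 xy.
have dx : 0 < q%:R * x + S by rewrite ltr_pwDl // mulr_gt0 // ltr0n.
have dy : 0 < q%:R * y + S by rewrite ltr_pwDl // mulr_gt0 // ltr0n.
rewrite -subr_ge0.
have -> : rate y - rate x = (y - x) * (q%:R * x * y + S * (x + y)) /
                            ((q%:R * x + S) * (q%:R * y + S)).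
  by rewrite /rate; field; rewrite !gt_eqF.
apply: divr_ge0; last by rewrite mulr_ge0 ?ltW.
by rewrite mulr_ge0 ?subr_ge0 // addr_ge0 ?mulr_ge0 ?addr_ge0 ?ler0n.
Qed.

Lemma ler_euler a b : 0 <= a -> a <= b -> euler a <= euler b.
Proof.
move=> a_ge0 ab; have b_ge0 := le_trans a_ge0 ab.
have [->|a_neq0] := eqVneq a 0.
  by rewrite /euler shrink0 subr_ge0 rate_le.
have a_gt0 : 0 < a by rewrite lt_def a_neq0.
have da : 0 < q%:R * a + S by rewrite ltr_pwDl // mulr_gt0 // ltr0n.
have db : 0 < q%:R * b + S.
  by rewrite ltr_pwDl // mulr_gt0 ?ltr0n // (lt_le_trans a_gt0).
rewrite /euler /shrink -subr_ge0.
have -> : b - (q%:R * b + S)^-1 * b ^+ 2 - (a - (q%:R * a + S)^-1 * a ^+ 2) =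
    (b - a) * ((q%:R - 1) * (q%:R * a * b + S * (a + b)) + S ^+ 2) /
    ((q%:R * a + S) * (q%:R * b + S)).
  by field; rewrite !gt_eqF.
apply: divr_ge0; last by rewrite mulr_ge0 ?ltW.
rewrite mulr_ge0 ?subr_ge0 // addr_ge0 ?sqr_ge0 // mulr_ge0 ?subr_ge0 ?ler1n //.
by rewrite addr_ge0 ?mulr_ge0 ?addr_ge0 ?ler0n.
Qed.

Let eta_cont_itv a b : 0 <= a -> {within `[a, b], continuous eta}.
Proof.
move=> a_ge0; apply: continuous_subspaceW eta_cont => x /=.
by rewrite !in_itv /= andbT => /andP[ax _]; apply: le_trans ax.
Qed.

Lemma eta_MVT a b : 0 <= a -> a < b ->
  exists2 c, a < c < b & eta b - eta a = - rate (eta c) * (b - a).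
Proof.
move=> a_ge0 ab.
have deriv x : x \in `]a, b[ -> is_derive x 1 eta (- rate (eta x)).
  rewrite in_itv /= => /andP[ax _]; rewrite /rate mulrC -mulNr.
  exact/eta_deriv/(le_lt_trans a_ge0 ax).
by have [c] := MVT ab deriv (eta_cont_itv a_ge0); rewrite in_itv /=; exists c.
Qed.

Lemma eta_IVT a b v : 0 <= a -> a <= b -> eta b <= v -> v <= eta a ->
  exists2 c, a <= c <= b & eta c = v.
Proof.
move=> a_ge0 ab v_ge v_le.
have v_mid : Num.min (eta a) (eta b) <= v <= Num.max (eta a) (eta b).
  by rewrite ge_min le_max v_ge v_le orbT.
by have [c] := IVT ab (eta_cont_itv a_ge0) v_mid; rewrite in_itv /=; exists c.
Qed.

(* On [eta t - d * rate (eta t), eta t] the vector field has magnitude at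
   most [rate (eta t)], so [eta] cannot cross the lower end before time
   [t + d]. *)
Lemma eta_ge_euler t d : 0 <= t -> 0 < d <= 1 -> 0 < eta t ->
  eta t - d * rate (eta t) <= eta (t + d).
Proof.
move=> t_ge0 /andP[d_gt0 d_le1] x_gt0.
have rx_gt0 : 0 < rate (eta t).
  by rewrite mulr_gt0 ?exprn_gt0 // invr_gt0 ltr_pwDl // mulr_gt0 // ltr0n.
have c_ge0 : 0 <= eta t - d * rate (eta t).
  by rewrite subr_ge0 (le_trans _ (rate_le (ltW x_gt0))) // ler_piMl // ltW.
have c_lt : eta t - d * rate (eta t) < eta t by rewrite ltrBlDr ltrDl mulr_gt0.
rewrite leNgt; apply/negP => below.
have t_le : t <= t + d by rewrite lerDl ltW.
have [u /andP[tu ud] eta_u] := eta_IVT t_ge0 t_le (ltW below) (ltW c_lt).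
have t_lt_u : t < u.
  rewrite lt_neqAle tu andbT; apply: contraTneq c_lt => tu_eq.
  by rewrite -eta_u -tu_eq ltxx.
have u_lt : u < t + d.
  rewrite lt_neqAle ud andbT; apply: contraTneq below => ud_eq.
  by rewrite -ud_eq eta_u ltxx.
have [xi /andP[t_xi xi_u]] := eta_MVT t_ge0 t_lt_u; rewrite eta_u => E.
have y_ge : eta t - d * rate (eta t) <= eta xi.
  by rewrite -eta_u eta_noninc ?(ltW xi_u) ?(le_trans t_ge0 (ltW t_xi)).
have ry_le := ler_rate (le_trans c_ge0 y_ge) (eta_noninc t_ge0 (ltW t_xi)).
have h1 : 0 <= (rate (eta t) - rate (eta xi)) * (u - t).
  by apply: mulr_ge0; rewrite subr_ge0 // ltW.
have h2 : 0 < rate (eta t) * (t + d - u) by rewrite mulr_gt0 ?subr_gt0.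
nra.
Qed.

Lemma eta_euler_step t : 0 <= t -> 0 < eta t -> euler (eta t) <= eta (t + 1).
Proof.
move=> t_ge0 x_gt0; have := @eta_ge_euler t 1 t_ge0 _ x_gt0.
by rewrite mul1r; apply; rewrite ltr01 lexx.
Qed.

Lemma eta_nat_gt0 r : 0 < eta 0 -> 0 < eta r%:R.
Proof.
(* Two half steps: a unit Euler step reaches 0 when q = 1 and S = 0. *)
move=> eta0_gt0; elim: r => // r IH.
have half_step t : 0 <= t -> 0 < eta t -> 0 < eta (t + 2^-1).
  move=> t_ge0 x_gt0.
  apply: lt_le_trans (@eta_ge_euler t 2^-1 t_ge0 _ x_gt0); last first.
    by rewrite invr_gt0 ltr0n invf_le1 // ler1n.
  have := rate_le (ltW x_gt0); lra.
have -> : r.+1%:R = r%:R + 2^-1 + 2^-1 :> R by rewrite -natr1; lra.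
by rewrite !half_step // addr_ge0 // invr_ge0 ler0n.
Qed.

(* With [S = 0] the vector field [- eta / q] would push a negative [eta] up,
   against monotonicity. *)
Lemma eta_ge0_S0 t : S = 0 -> 0 <= t -> 0 <= eta t.
Proof.
move=> S0 t_ge0; rewrite leNgt; apply/negP => eta_lt0.
have t_lt : t < t + 1 by rewrite ltrDl.
have [xi /andP[t_xi _] E] := eta_MVT t_ge0 t_lt.
have y_lt0 : eta xi < 0 := le_lt_trans (eta_noninc t_ge0 (ltW t_xi)) eta_lt0.
have ry_lt0 : rate (eta xi) < 0.
  have qy_lt0 : q%:R * eta xi < 0 by rewrite pmulr_rlt0 // ltr0n.
  by rewrite /rate S0 addr0 pmulr_llt0 ?invr_lt0 // exprn_even_gt0 //= lt_eqF.
have := eta_noninc t_ge0 (ltW t_lt).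
by rewrite -subr_le0 E addrAC subrr add0r mulr1 oppr_le0 leNgt ry_lt0.
Qed.

End EulerComparison.

Section TopEigenvalueBound.
Variables (R : realType) (n q : nat) (lam : nat -> R) (eta : R -> R).
Hypothesis lam_ge0 : forall l, (1 <= l <= n)%N -> 0 <= lam l.
Hypothesis lam_antitone :
  forall l m, (1 <= l)%N -> (l <= m)%N -> (m <= n)%N -> lam m <= lam l.
Hypothesis q_gt0 : (0 < q)%N.
Hypothesis q_le_n : (q <= n)%N.
Hypothesis eta0 : eta 0 = lam 1%N.
Hypothesis eta_cont : {within `[0%R, +oo[, continuous eta}.
Let S := \sum_(q.+1 <= l < n.+1) lam l.
Hypothesis eta_deriv : forall t : R, 0 < t ->
  is_derive t 1 eta (- (eta t ^+ 2) / (q%:R * eta t + S)).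
Hypothesis eta_noninc : forall s t : R, 0 <= s -> s <= t -> eta t <= eta s.

Local Notation s := [seq lam l | l <- index_iota 1 n.+1].

Let lam_range l : (q.+1 <= l < n.+1)%N -> (1 <= l <= n)%N.
Proof. by case/andP=> ql; rewrite ltnS => ->; rewrite andbT (leq_trans _ ql). Qed.

Let S_ge0 : 0 <= S.
Proof. by rewrite /S big_nat_cond sumr_ge0 // => l /andP[/lam_range/lam_ge0]. Qed.

Lemma Phi_eig_top_le_eta r : Phi_eig s r (lam 1) <= eta r%:R.
Proof.
have top : (1 <= 1 <= n)%N by rewrite (leq_trans q_gt0 q_le_n).
(* A zero top eigenvalue forces S = 0, where only eta >= 0 is needed. *)
have [lam1_eq0|lam1_neq0] := eqVneq (lam 1) 0.
  have S_eq0 : S = 0.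
    rewrite /S big_nat_cond big1 // => l /andP[/lam_range hl _].
    have /andP[l1 ln] := hl.
    by apply/eqP; rewrite eq_le lam_ge0 // andbT -lam1_eq0 lam_antitone.
  apply: le_trans (Phi_eig_le lam_ge0 r top) _.
  by rewrite lam1_eq0 (eta_ge0_S0 q_gt0 eta_cont eta_deriv eta_noninc) ?ler0n.
have eta_gt0 k : 0 < eta k%:R.
  apply: (eta_nat_gt0 q_gt0 S_ge0 eta_cont eta_deriv eta_noninc k).
  by rewrite eta0 lt_def lam1_neq0 lam_ge0.
elim: r => [|r IH]; first by rewrite eta0.
have a_ge0 := Phi_eig_ge0 lam_ge0 r top.
rewrite Phi_eigS -natr1.
have T_le := Phi_eig_sum_le lam_ge0 lam_antitone r q_le_n.
apply: le_trans (ler_shrinkT a_ge0 (Phi_eig_le_sum lam_ge0 r top) T_le) _.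
apply: le_trans (ler_euler q_gt0 S_ge0 a_ge0 IH) _.
exact: (eta_euler_step q_gt0 S_ge0 eta_cont eta_deriv eta_noninc) (eta_gt0 r).
Qed.

End TopEigenvalueBound.

Theorem lemmaD2 (R : realType) (n : nat) (H : 'M[R]_n) (lam : nat -> R)
  (q : nat) (eta : R -> R) :
  H^T = H ->
  (forall v : 'rV[R]_n, 0 <= (v *m H *m v^T) 0 0) ->
  char_poly H = \prod_(1 <= l < n.+1) ('X - (lam l)%:P) ->
  (forall l m : nat, (1 <= l)%N -> (l <= m)%N -> (m <= n)%N -> lam m <= lam l) ->
  (1 <= q)%N -> (q <= n)%N ->
  eta 0 = lam 1%N ->
  {within `[0%R, +oo[, continuous eta} ->
  (forall t : R, 0 < t ->
     is_derive t 1 eta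
       (- (eta t ^+ 2) / (q%:R * eta t + \sum_(q.+1 <= l < n.+1) lam l))) ->
  (forall s t : R, 0 <= s -> s <= t -> eta t <= eta s) ->
  forall (r : nat) (mu : R), eigenvalue (iter r (@Phi R n) H) mu -> mu <= eta r%:R.
Proof.
move=> H_sym H_psd H_char lam_antitone q_gt0 q_le_n eta0 eta_cont eta_deriv
  eta_noninc r mu.
case: n => [|n] in H lam_antitone q_le_n eta_deriv H_sym H_psd H_char *.
  by rewrite leqn0 in q_le_n; rewrite (eqP q_le_n) in q_gt0.
set s := [seq lam l | l <- index_iota 1 n.+2].
have char_s : char_poly H = \prod_(x <- s) ('X - x%:P) by rewrite big_map.
have lam_ge0 l : (1 <= l <= n.+1)%N -> 0 <= lam l.
  move=> hl; apply: psd_eigenvalue_ge0 H_psd _.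
  by rewrite eigenvalue_root_char char_s root_prod_XsubC map_f // mem_index_iota.
have [P [d [P_unit ->{H H_sym H_psd H_char char_s} perm_d]]] :=
  sym_conj_diag H_sym char_s.
rewrite (iter_Phi_conj_diag r P_unit perm_d).
move=> /(eigenvalue_conj_diag P_unit)[i ->].
have : d 0 i \in s by rewrite -(perm_mem perm_d) map_f ?mem_enum.
rewrite mxE => /mapP[l]; rewrite mem_index_iota ltnS => /andP[l_ge1 l_le] ->.
apply: le_trans (Phi_eig_antitone lam_ge0 lam_antitone r (leqnn 1) l_ge1 l_le) _.
exact: (Phi_eig_top_le_eta lam_ge0 lam_antitone q_gt0 q_le_n eta0 eta_cont
  eta_deriv eta_noninc r).
Qed.
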